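(* Let $T$ be a tree and $\mathfrak p=(R\overset{d}{\twoheadleftarrow}S\overset{j}{\hookrightarrow}T)\in\mathfrak P_T$. The map $\mathfrak P_R\to\mathfrak P_T(\ge\mathfrak p)$, $\mathfrak q\mapsto\mathfrak q\circ\mathfrak p$, is an isomorphism of posets, where $\mathfrak P_T(\ge\mathfrak p)=\{\mathfrak q\in\mathfrak P_T:\mathfrak q\ge\mathfrak p\}$ with the induced order.
   Context: A tree is a nonempty finite connected acyclic graph with vertex set $V(T)$ and edge set $E(T)$. Subgraphs are full (vertex-induced); a subtree is a subgraph which is a tree. A quotient tree $S\twoheadrightarrow R$ is a tree $R$ with a surjection $V(S)\to V(R)$ whose fibers are vertex sets of subtrees, vertices of $R$ adjacent iff an edge of $S$ joins their fibers. Poset $\mathfrak P_T$: elements are correspondences $(R\overset{q}{\twoheadleftarrow}S\overset{i}{\hookrightarrow}T)$ with $i$ inclusion of a subtree and $q$ a quotient of trees (equivalently, a subtree $S$ of $T$ with a partition of $S$ into subtrees, the fibers of $q$; correspondences differing by an isomorphism of the quotient tree compatible with the maps are identified). Composition: for $\mathfrak q=(P\twoheadleftarrow Q\hookrightarrow R)$ and $\mathfrak p=(R\twoheadleftarrow S\hookrightarrow T)$, $\mathfrak q\circ\mathfrak p=(P\twoheadleftarrow Q\times_RS\hookrightarrow T)$ where $Q\times_RS$ is the subtree of $S$ on the vertices mapping into $Q$, included into $T$ via $S$ and mapped onto $P$ via $Q$. Order: $\mathfrak p\ge\mathfrak p'$ iff $\mathfrak p=\mathfrak q\circ\mathfrak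 p'$ for some such correspondence $\mathfrak q$. *)

From mathcomp Require Import all_boot.
Set Implicit Arguments. Unset Strict Implicit. Unset Printing Implicit Defensive.

(* x and y are joined by an e-walk staying inside A (x itself assumed in A) *)
Definition conn_in (V : finType) (e : rel V) (A : {set V}) (x y : V) : Prop :=
  exists s : seq V, [/\ path e x s, all (fun z => z \in A) s & last x s = y].

Definition has_cycle_in (V : finType) (e : rel V) (A : {set V}) : Prop :=
  exists (x : V) (s : seq V),
    [/\ x \in A /\ all (fun z => z \in A) s, 2 <= size s, uniq (x :: s),
        path e x s & e (last x s) x].

Definition tree_on (V : finType) (e : rel V) (A : {set V}) : Prop :=
  [/\ A != set0,
      (forall x y, x \in A -> y \in A -> conn_in e A x y)
    & ~ has_cycle_in e A].

Definition is_tree (V : finType) (e : rel V) : Prop :=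
  [/\ symmetric e, irreflexive e & tree_on e [set: V]].

Definition qrel (V : finType) (e : rel V) : rel {set V} :=
  fun B C => (B != C) && [exists x in B, exists y in C, e x y].

(* A correspondence R <<- S ->> T is encoded (canonically, up to the
   identification by isomorphisms of R) by the pair (S, fibers of q). *)
Definition corr (V : finType) := ({set V} * {set {set V}})%type.

Definition is_corr (V : finType) (e : rel V) (p : corr V) : Prop :=
  [/\ tree_on e p.1,
      partition p.2 p.1,
      (forall B, B \in p.2 -> tree_on e B)
    & tree_on (qrel e) p.2].

(* vertex type of the quotient tree R of p *)
Definition blk (V : finType) (p : corr V) := {B : {set V} | B \in p.2}.

Definition brel (V : finType) (e : rel V) (p : corr V) : rel (blk p) :=
  fun B C => qrel e (val B) (val C).

Arguments brel {V} e p.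

Definition corr_comp {V : finType} (p : corr V) (q : corr (blk p)) : corr V :=
  (\bigcup_(B in q.1) val B,
   [set (\bigcup_(B in C) val B) | C : {set blk p} in q.2]).

Arguments corr_comp {V} p q.

Definition ge_corr (V : finType) (e : rel V) (p p' : corr V) : Prop :=
  exists q : corr (blk p'), is_corr (brel e p') q /\ corr_comp p' q = p.

From mathcomp Require Import all_boot.
Set Implicit Arguments. Unset Strict Implicit. Unset Printing Implicit Defensive.

(* Composing with p replaces every vertex of the quotient tree R, i.e. every
   block of p, by the subtree of T it stands for: q o p is obtained from q by
   taking unions of blocks.  As the blocks are nonempty, disjoint and connected,
   and edges of R are edges of T between blocks, this union map is injective
   and carries subtrees of R to subtrees of T, partitions to partitions and the
   adjacency of R to that of T.  Hence q |-> q o p is an injective map into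
   P_T(>= p), onto by the very definition of >=.  For the order, the quotient
   tree of q' o p is isomorphic to that of q' through the union map, and
   transporting correspondences along this isomorphism identifies the
   composites through q' o p with those through q'. *)

Section Walks.
Variables (V : finType) (e : rel V).

Lemma conn_in_trans (A : {set V}) x y z :
  conn_in e A x y -> conn_in e A y z -> conn_in e A x z.
Proof.
move=> [s [e_s A_s <-]] [t [e_t A_t <-]]; exists (s ++ t).
by rewrite cat_path e_s e_t all_cat A_s A_t last_cat.
Qed.

Lemma conn_in_edge (A : {set V}) x y : y \in A -> e x y -> conn_in e A x y.
Proof. by move=> Ay exy; exists [:: y]; rewrite /= Ay exy. Qed.

Lemma conn_in_subset (A B : {set V}) x y :
  A \subset B -> conn_in e A x y -> conn_in e B x y.
Proof.
move=> sAB [s [e_s A_s <-]]; exists s; split=> //.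
by apply: sub_all A_s => z; apply: (subsetP sAB).
Qed.

Lemma has_cycle_in_subset (A B : {set V}) :
  A \subset B -> has_cycle_in e A -> has_cycle_in e B.
Proof.
move=> sAB [x [s [[Ax A_s] size_s uniq_s e_s e_last]]]; exists x, s.
split=> //; split; first exact: (subsetP sAB).
by apply: sub_all A_s => z; apply: (subsetP sAB).
Qed.

End Walks.

Section TreeImage.
Variables (U W : finType) (eU : rel U) (eW : rel W) (f : U -> W) (A : {set U}).
Hypothesis f_inj : {in A &, injective f}.
Hypothesis f_rel : {in A &, forall a b, eW (f a) (f b) = eU a b}.

Lemma all_imset_map (s' : seq W) :
  all (mem (f @: A)) s' -> exists2 s, all (mem A) s & map f s = s'.
Proof.
elim: s' => [|y s' IHs] /=; first by exists [::].
case/andP=> /imsetP [a Aa ->] /IHs [s A_s <-].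
by exists (a :: s); rewrite /= ?Aa.
Qed.

Lemma path_map_in x s : x \in A -> all (mem A) s ->
  path eW (f x) (map f s) = path eU x s.
Proof.
elim: s x => [|y s IHs] x //= Ax /andP [Ay A_s].
by rewrite f_rel // IHs.
Qed.

Lemma conn_in_imset x y : x \in A -> conn_in eU A x y ->
  conn_in eW (f @: A) (f x) (f y).
Proof.
move=> Ax [s [e_s A_s <-]]; exists (map f s); split.
- by rewrite path_map_in.
- by rewrite all_map; apply: sub_all A_s => z Az; apply: imset_f.
- by rewrite last_map.
Qed.

Lemma has_cycle_in_imset : has_cycle_in eW (f @: A) -> has_cycle_in eU A.
Proof.
case=> _ [s' [[/imsetP [x Ax ->] A_s'] size_s' uniq_s' e_s' e_last]].
have [s A_s def_s'] := all_imset_map A_s'; subst s'.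
have A_xs : all (mem A) (x :: s) by rewrite /= Ax.
exists x, s; split=> //.
- by rewrite size_map in size_s'.
- rewrite -(map_inj_in_uniq (f := f)) //.
  by apply: sub_in2 f_inj => z /(allP A_xs).
- by rewrite -path_map_in.
- rewrite -f_rel -?(last_map f) //; exact: (allP A_xs) _ (mem_last _ _).
Qed.

Lemma tree_on_imset : tree_on eU A -> tree_on eW (f @: A).
Proof.
case=> [A_neq0 A_conn A_acyclic]; split.
- by rewrite imset_eq0.
- move=> _ _ /imsetP [x Ax ->] /imsetP [y Ay ->].
  exact: conn_in_imset (A_conn _ _ Ax Ay).
- by move/has_cycle_in_imset.
Qed.

End TreeImage.

Lemma partition_imset (U W : finType) (G : {set U} -> {set W})
    (P : {set {set U}}) (D : {set U}) :
  (forall Q : {set {set U}}, cover (G @: Q) = G (cover Q)) ->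
  (forall X Y : {set U}, [disjoint X & Y] -> [disjoint G X & G Y]) ->
  (forall X : {set U}, G X = set0 -> X = set0) ->
  partition P D -> partition (G @: P) (G D).
Proof.
move=> G_cover G_disj G_eq0 partP.
have GP_neq0 : set0 \notin G @: P.
  apply/imsetP=> -[X PX /esym/G_eq0 X0].
  by rewrite X0 (partition0 partP) in PX.
apply/and3P; split=> //; first by rewrite G_cover (cover_partition partP).
have [] // := trivIimset _ GP_neq0 => X Y PX PY neqYX; apply: G_disj.
by apply: (trivIsetP (partition_trivIset partP)); rewrite // eq_sym.
Qed.

Definition corr_map (U W : finType) (f : U -> W) (r : corr U) : corr W :=
  (f @: r.1, [set f @: Z | Z : {set U} in r.2]).

Lemma corr_mapK (U W : finType) (f : U -> W) (g : W -> U) :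
  cancel g f -> cancel (corr_map g) (corr_map f).
Proof.
move=> gK [S P]; rewrite /corr_map /= -imset_comp (eq_imset _ gK) imset_id.
rewrite -imset_comp (eq_imset (g := id)) ?imset_id // => Z /=.
by rewrite -imset_comp (eq_imset _ gK) imset_id.
Qed.

Section GraphIsomorphism.
Variables (U W : finType) (eU : rel U) (eW : rel W) (f : U -> W).
Hypothesis f_inj : injective f.
Hypothesis f_rel : forall a b, eW (f a) (f b) = eU a b.

Lemma qrel_imset (Y Z : {set U}) : qrel eW (f @: Y) (f @: Z) = qrel eU Y Z.
Proof.
rewrite /qrel (inj_eq (imset_inj f_inj)); congr (_ && _).
apply/existsP/existsP=> [[x /andP [/imsetP [a Ya ->] /existsP [y]]]|].
  case/andP=> /imsetP [b Zb ->] eab; exists a; rewrite Ya /=.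
  by apply/existsP; exists b; rewrite Zb -f_rel.
case=> a /andP [Ya /existsP [b /andP [Zb eab]]]; exists (f a).
by rewrite imset_f //=; apply/existsP; exists (f b); rewrite imset_f ?f_rel.
Qed.

Lemma is_corr_map r : is_corr eU r -> is_corr eW (corr_map f r).
Proof.
have f_inj_in (A : {set U}) : {in A &, injective f} by move=> a b _ _ /f_inj.
case=> [tree_S part_S tree_blocks tree_R]; split=> /=.
- exact: tree_on_imset tree_S.
- apply: partition_imset part_S.
  + move=> Q; rewrite cover_imset; apply/setP=> x.
    apply/bigcupP/imsetP=> [[Z QZ /imsetP [a Za ->]]|[a /bigcupP [Z QZ Za] ->]].
      by exists a => //; apply/bigcupP; exists Z.
    by exists Z; rewrite ?imset_f.
  + by move=> X Y; rewrite imset_disjoint.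
  + by move=> X /eqP; rewrite imset_eq0 => /eqP.
- by move=> _ /imsetP [Z QZ ->]; apply: tree_on_imset (tree_blocks _ QZ).
- apply: tree_on_imset tree_R => [Y Z _ _|Y Z _ _]; first exact: imset_inj.
  exact: qrel_imset.
Qed.

End GraphIsomorphism.

Definition cover_blk (V : finType) (p : corr V) (X : {set blk p}) : {set V} :=
  \bigcup_(B in X) val B.

Arguments cover_blk {V p}.

Section Blocks.
Variables (V : finType) (e : rel V) (p : corr V).
Hypothesis part_p : partition p.2 p.1.

Lemma blk_neq0 (B : blk p) : exists x, x \in val B.
Proof. by apply/set0Pn; apply: (partition_neq0 part_p); apply: valP. Qed.

Lemma blk_eq (B C : blk p) x : x \in val B -> x \in val C -> B = C.
Proof.
move=> Bx Cx; apply: val_inj; apply/eqP; apply: contraTT isT => neqBC.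
have := trivIsetP (partition_trivIset part_p) _ _ (valP B) (valP C) neqBC.
by move/disjointFr/(_ Bx); rewrite Cx.
Qed.

Lemma cover_blk_subset (X Y : {set blk p}) :
  (cover_blk X \subset cover_blk Y) = (X \subset Y).
Proof.
apply/idP/idP=> [sXY|sXY]; last first.
  by apply/bigcupsP=> B XB; apply: bigcup_sup (subsetP sXY _ XB).
apply/subsetP=> B XB; have [x Bx] := blk_neq0 B.
have /bigcupP [C YC Cx] : x \in cover_blk Y.
  by apply: (subsetP sXY); apply/bigcupP; exists B.
by rewrite (blk_eq Bx Cx).
Qed.

Lemma cover_blk_inj : injective (@cover_blk V p).
Proof.
by move=> X Y eqXY; apply/eqP; rewrite eqEsubset -!cover_blk_subset eqXY subxx.
Qed.

Lemma partition_cover_blk (Q : {set {set blk p}}) (X : {set blk p}) :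
  partition Q X -> partition (cover_blk @: Q) (cover_blk X).
Proof.
apply: partition_imset.
- move=> P; rewrite cover_imset; apply/setP=> x.
  apply/bigcupP/bigcupP=> [[Y PY /bigcupP [B YB Bx]]|[B /bigcupP [Y PY YB] Bx]].
    by exists B => //; apply/bigcupP; exists Y.
  by exists Y => //; apply/bigcupP; exists B.
- move=> Y Z disjYZ; apply/bigcup_disjoint=> C ZC; rewrite disjoint_sym.
  apply/bigcup_disjoint=> B YB; rewrite disjoint_sym.
  apply/pred0P=> x /=; apply/negbTE/andP=> -[Bx Cx].
  by rewrite (blk_eq Bx Cx) in YB; rewrite (disjointFr disjYZ YB) in ZC.
- by move=> Y Y0; apply: cover_blk_inj; rewrite Y0 /cover_blk big_set0.
Qed.

Lemma qrel_cover_blk (Q : {set {set blk p}}) : trivIset Q ->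
  {in Q &, forall X Y,
    qrel e (cover_blk X) (cover_blk Y) = qrel (brel e p) X Y}.
Proof.
move=> trivQ X Y QX QY; rewrite /qrel (inj_eq cover_blk_inj).
have [//|neqXY] /= := eqVneq X Y.
have disjXY := trivIsetP trivQ _ _ QX QY neqXY.
apply/existsP/existsP=> [[x /andP [/bigcupP [B XB Bx] /existsP [y]]]|].
  case/andP=> /bigcupP [C YC Cy] exy; exists B; rewrite XB /=.
  apply/existsP; exists C; rewrite YC /brel /qrel /=; apply/andP; split.
    by apply: contraTneq YC => /val_inj <-; rewrite (disjointFr disjXY XB).
  by apply/existsP; exists x; rewrite Bx; apply/existsP; exists y; rewrite Cy.
case=> B /andP [XB /existsP [C /andP [YC]]].
case/andP=> _ /existsP [x /andP [Bx /existsP [y /andP [Cy exy]]]].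
exists x; apply/andP; split; first by apply/bigcupP; exists B.
by apply/existsP; exists y; rewrite exy andbT; apply/bigcupP; exists C.
Qed.

Lemma corr_comp_inj : injective (corr_comp p).
Proof.
by case=> [S P] [S' P'] [/cover_blk_inj -> /(imset_inj cover_blk_inj) ->].
Qed.

Section Refinement.
Variable q : corr (blk p).
Hypothesis triv_q : trivIset q.2.

Definition blk_comp (C : blk q) : blk (corr_comp p q) :=
  exist _ (cover_blk (val C)) (imset_f cover_blk (valP C)).

Lemma blk_comp_inj : injective blk_comp.
Proof. by move=> C D /(congr1 val) /cover_blk_inj /val_inj. Qed.

Lemma brel_blk_comp C D :
  brel e (corr_comp p q) (blk_comp C) (blk_comp D) = brel (brel e p) q C D.
Proof. exact: qrel_cover_blk (valP C) (valP D). Qed.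

Lemma blk_comp_surj (D : blk (corr_comp p q)) : exists C, blk_comp C == D.
Proof.
have /imsetP [X qX defD] := valP D; exists (exist _ X qX).
by apply/eqP/val_inj; rewrite /= defD.
Qed.

Definition blk_comp_inv (D : blk (corr_comp p q)) : blk q :=
  xchoose (blk_comp_surj D).

Lemma blk_comp_invK : cancel blk_comp_inv blk_comp.
Proof. by move=> D; apply/eqP/(xchooseP (blk_comp_surj D)). Qed.

Lemma brel_blk_comp_inv D D' :
  brel (brel e p) q (blk_comp_inv D) (blk_comp_inv D') =
  brel e (corr_comp p q) D D'.
Proof. by rewrite -brel_blk_comp !blk_comp_invK. Qed.

Lemma cover_blk_comp (Z : {set blk q}) :
  cover_blk (blk_comp @: Z) = cover_blk (cover_blk Z).
Proof.
apply/setP=> x; apply/bigcupP/bigcupP.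
- case=> _ /imsetP [C ZC ->] /bigcupP [B CB Bx].
  by exists B => //; apply/bigcupP; exists C.
- case=> B /bigcupP [C ZC CB] Bx.
  by exists (blk_comp C); [apply: imset_f | apply/bigcupP; exists B].
Qed.

Lemma corr_comp_map r :
  corr_comp (corr_comp p q) (corr_map blk_comp r) = corr_comp p (corr_comp q r).
Proof.
congr (_, _); first exact: cover_blk_comp.
rewrite /= -!imset_comp; apply: eq_imset => Z /=; exact: cover_blk_comp.
Qed.

Lemma ge_corr_comp q0 :
  ge_corr (brel e p) q0 q <-> ge_corr e (corr_comp p q0) (corr_comp p q).
Proof.
split=> [[r [corr_r <-]]|[r' [corr_r' def_q0]]].
  exists (corr_map blk_comp r); split; last exact: corr_comp_map.
  exact: is_corr_map blk_comp_inj brel_blk_comp _ corr_r.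
exists (corr_map blk_comp_inv r'); split.
  exact: is_corr_map (can_inj blk_comp_invK) brel_blk_comp_inv _ corr_r'.
apply: corr_comp_inj; rewrite -corr_comp_map corr_mapK ?def_q0 //.
exact: blk_comp_invK.
Qed.

End Refinement.

Hypothesis tree_blocks : forall B, B \in p.2 -> tree_on e B.
Hypothesis acyclic_T : ~ has_cycle_in e [set: V].

Lemma conn_in_cover_blk (X : {set blk p}) (B C : blk p) x y :
  B \in X -> conn_in (brel e p) X B C -> x \in val B -> y \in val C ->
  conn_in e (cover_blk X) x y.
Proof.
have sub_cover D : D \in X -> val D \subset cover_blk X.
  by move=> XD; apply: bigcup_sup XD.
move=> XB [s [e_s X_s <-]]; elim: s B XB x e_s X_s => [|D s IHs] B XB x /=.
  move=> _ _ Bx By; have [_ B_conn _] := tree_blocks (valP B).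
  exact: conn_in_subset (sub_cover _ XB) (B_conn _ _ Bx By).
case/andP=> eBD e_s /andP [XD X_s] Bx Cy.
case/andP: eBD => _ /existsP [a /andP [Ba /existsP [b /andP [Db eab]]]].
have [_ B_conn _] := tree_blocks (valP B).
apply: conn_in_trans (conn_in_subset (sub_cover _ XB) (B_conn _ _ Bx Ba)) _.
apply: conn_in_trans (conn_in_edge _ eab) (IHs _ XD _ e_s X_s Db Cy).
exact: subsetP (sub_cover _ XD) _ Db.
Qed.

Lemma tree_on_cover_blk (X : {set blk p}) :
  tree_on (brel e p) X -> tree_on e (cover_blk X).
Proof.
case=> [X_neq0 X_conn _]; split.
- case/set0Pn: X_neq0 => B XB; have [x Bx] := blk_neq0 B.
  by apply/set0Pn; exists x; apply/bigcupP; exists B.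
- move=> x y /bigcupP [B XB Bx] /bigcupP [C XC Cy].
  exact: conn_in_cover_blk XB (X_conn _ _ XB XC) Bx Cy.
- by move/(has_cycle_in_subset (subsetT _))/acyclic_T.
Qed.

Lemma is_corr_comp q : is_corr (brel e p) q -> is_corr e (corr_comp p q).
Proof.
case=> [tree_S part_S tree_q tree_R]; split=> /=.
- exact: tree_on_cover_blk.
- exact: partition_cover_blk.
- by move=> _ /imsetP [Y QY ->]; apply/tree_on_cover_blk/tree_q.
- apply: tree_on_imset tree_R => [Y Z _ _|]; first exact: cover_blk_inj.
  exact/qrel_cover_blk/partition_trivIset/part_S.
Qed.

End Blocks.

Theorem lemma2p22 (V : finType) (e : rel V) (p : corr V) :
  is_tree e -> is_corr e p ->
  (* q |-> q o p maps P_R into P_T(>= p) *)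
  (forall q : corr (blk p), is_corr (brel e p) q ->
     is_corr e (corr_comp p q) /\ ge_corr e (corr_comp p q) p) /\
  (* it is injective *)
  (forall q q' : corr (blk p), is_corr (brel e p) q -> is_corr (brel e p) q' ->
     corr_comp p q = corr_comp p q' -> q = q') /\
  (* it is surjective onto P_T(>= p) *)
  (forall x : corr V, is_corr e x -> ge_corr e x p ->
     exists q : corr (blk p), is_corr (brel e p) q /\ corr_comp p q = x) /\
  (* it preserves and reflects the order *)
  (forall q q' : corr (blk p), is_corr (brel e p) q -> is_corr (brel e p) q' ->
     (ge_corr (brel e p) q q' <-> ge_corr e (corr_comp p q) (corr_comp p q'))).
Proof.
move=> [_ _ [_ _ acyclic_T]] [_ part_p tree_blocks _].
split; [|split; [|split]].
- by move=> q corr_q; split; [apply: is_corr_comp | exists q].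
- by move=> q q' _ _; apply: corr_comp_inj.
- by move=> x _ [q [corr_q <-]]; exists q.
- move=> q q' _ [_ part_q' _ _].
  exact/ge_corr_comp/partition_trivIset/part_q'.
Qed.
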